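(* Let $(\varepsilon_i)_{i\ge4}$ and $(\varepsilon'_i)_{i\ge l}$ be elements of $\mathcal{D}^\infty$ such that $\sum_{i=4}^\infty\varepsilon_i\alpha^i=\sum_{i=l}^\infty\varepsilon'_i\alpha^i$, where $l<4$ and $\varepsilon'_l=1$. Then $\varepsilon'_l\alpha^l+\varepsilon'_{l+1}\alpha^{l+1}+\cdots+\varepsilon'_3\alpha^3$ belongs to $S$. In particular $l\ge-3$, and $\varepsilon'_l\alpha^l+\cdots+\varepsilon'_3\alpha^3=\alpha^{-3}+\alpha^{-2}+1+\alpha^3$ if $l=-3$; $\varepsilon'_l\alpha^l+\cdots+\varepsilon'_3\alpha^3=\alpha^{-2}+\alpha^{-1}+\alpha$ if $l=-2$; $\varepsilon'_l\alpha^l+\cdots+\varepsilon'_3\alpha^3=\alpha^{-1}+1+\alpha^2$ if $l=-1$.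
   Context: Let $P(x)=x^4-x^3-x^2-x-1$. Its roots are $\beta=\beta_1\approx 1.9275$, a real root $\beta_2\approx-0.7748$, and a pair of complex conjugate roots $\beta_3\approx-0.0763+0.8147i$ and $\overline{\beta_3}$. For $i\in\mathbb{Z}$ put $\alpha^i=(\beta_2^i,\beta_3^i)\in\mathbb{R}\times\mathbb{C}$, with $\alpha^0=1=(1,1)$; arithmetic is componentwise and an integer $n$ is identified with $(n,n)$. $\mathcal{D}^\infty$ is the set of sequences $(\varepsilon_i)_{i\ge l}$, $l\in\mathbb{Z}$, with $\varepsilon_i\in\{0,1\}$ and containing no four consecutive $1$'s. $S$ is the set $\{\pm\sum_{i=0}^3c_i\alpha^i : c_i\in\{0,1\},\ c_0c_1c_2c_3\neq1111\}\cup\{\pm(\alpha^{-1}+1+\alpha^2),\pm(\alpha^{-2}+\alpha^{-1}+\alpha),\pm(\alpha^{-3}+\alpha^{-2}+1+\alpha^3)\}$. *)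

From Stdlib Require Import Reals ZArith Lra.
From Coquelicot Require Import Coquelicot.
Open Scope R_scope.

Definition PR (x : R) : R := x ^ 4 - x ^ 3 - x ^ 2 - x - 1.
Definition PC (z : C) : C :=
  (z ^ 4 - z ^ 3 - z ^ 2 - z - RtoC 1)%C.

Definition Cpowz (z : C) (k : Z) : C :=
  match k with
  | Z0 => RtoC 1
  | Zpos p => Cpow z (Pos.to_nat p)
  | Zneg p => Cinv (Cpow z (Pos.to_nat p))
  end.

(* Elements of R x C with componentwise arithmetic; alpha^k = (b2^k, b3^k). *)
Definition RC := (R * C)%type.
Definition RCadd (u v : RC) : RC := (fst u + fst v, (snd u + snd v)%C).
Definition RCopp (u : RC) : RC := (- fst u, (- snd u)%C).
Definition RCzero : RC := (0, RtoC 0).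
Definition alpha_pow (b2 : R) (b3 : C) (k : Z) : RC := (powerRZ b2 k, Cpowz b3 k).

(* Digit sequences (eps_i)_{i >= l}: eps : Z -> bool, only values at i >= l matter.
   Membership in D^infty: no four consecutive 1's (among indices >= l). *)
Definition D_inf (l : Z) (eps : Z -> bool) : Prop :=
  forall i : Z, (l <= i)%Z ->
    ~ (eps i = true /\ eps (i + 1)%Z = true /\ eps (i + 2)%Z = true /\ eps (i + 3)%Z = true).

Definition digit (b : bool) : R := if b then 1 else 0.

Definition term_R (b2 : R) (l : Z) (eps : Z -> bool) (n : nat) : R :=
  digit (eps (l + Z.of_nat n)%Z) * powerRZ b2 (l + Z.of_nat n).
Definition term_C (b3 : C) (l : Z) (eps : Z -> bool) (n : nat) : C :=
  (RtoC (digit (eps (l + Z.of_nat n)%Z)) * Cpowz b3 (l + Z.of_nat n))%C.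

Fixpoint fin_sum (b2 : R) (b3 : C) (l : Z) (eps : Z -> bool) (m : nat) : RC :=
  match m with
  | O => RCzero
  | S m' => RCadd (fin_sum b2 b3 l eps m')
                  (term_R b2 l eps m', term_C b3 l eps m')
  end.

Definition head_sum (b2 : R) (b3 : C) (l : Z) (eps : Z -> bool) : RC :=
  fin_sum b2 b3 l eps (Z.to_nat (4 - l)).

Definition bR (b : bool) : R := digit b.

Definition S_set (b2 : R) (b3 : C) (v : RC) : Prop :=
  let a := alpha_pow b2 b3 in
  let sc (c : bool) (k : Z) : RC := (bR c * fst (a k), (RtoC (bR c) * snd (a k))%C) in
  let pm (w : RC) := v = w \/ v = RCopp w in
  (exists c0 c1 c2 c3 : bool,
      ~ (c0 = true /\ c1 = true /\ c2 = true /\ c3 = true) /\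
      pm (RCadd (sc c0 0%Z) (RCadd (sc c1 1%Z) (RCadd (sc c2 2%Z) (sc c3 3%Z)))))
  \/ pm (RCadd (a (-1)%Z) (RCadd (a 0%Z) (a 2%Z)))
  \/ pm (RCadd (a (-2)%Z) (RCadd (a (-1)%Z) (a 1%Z)))
  \/ pm (RCadd (a (-3)%Z) (RCadd (a (-2)%Z) (RCadd (a 0%Z) (a 3%Z)))).

From Stdlib Require Import Reals Lra Psatz ZArith List Bool Lia.
From Coquelicot Require Import Coquelicot.
Import ListNotations.
Open Scope R_scope.

(* Put [δ_i = ε'_i - ε_i], with [ε_i = 0] for [i < 4], so that [Σ_{i >= l} δ_i α^i = 0].
   Dividing by [α] with [α^4 = 1 + α + α^2 + α^3], each partial sum [Σ_{l <= i < l+N} δ_i α^i]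
   is [α^(l+N)] times a carry [c_N = a0 + a1 α + a2 α^2 + a3 α^3] with [a_k ∈ Z].  Since the
   series vanishes, [α^(l+N) c_N] is minus the tail, which is at most [|α|^(l+N) / (1 - |α|)] in
   each coordinate; hence [|c_N| <= 1 / (1 - |β_k|)] for [k = 2, 3].  Numerical enclosures of
   [β2] and [β3] turn these bounds into a finite, explicitly computed set of admissible carries,
   and only the carries lying on an infinite path inside it can occur.  Checking the digit words
   [ε'_l ... ε'_3] that start with [1], avoid [1111] and lead into that set leaves [l >= -3] and
   exactly the three exceptional elements of [S]; for [l >= 0] the head is trivially in [S]. *)

Section Partial_sums.

Context {G : AbelianGroup}.

Fixpoint psum (f : nat -> G) (n : nat) : G :=
  match n with O => zero | S m => plus (psum f m) (f m) end.

Lemma psum_S (f : nat -> G) (n : nat) : psum f (S n) = sum_n f n.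
Proof.
  induction n as [|n IH].
  - rewrite sum_O; apply plus_zero_l.
  - rewrite sum_Sn, <- IH; reflexivity.
Qed.

Lemma psum_add (f : nat -> G) (m j : nat) :
  psum f (m + j) = plus (psum f m) (psum (fun i => f (m + i)%nat) j).
Proof.
  induction j as [|j IH]; cbn [psum].
  - rewrite Nat.add_0_r, plus_zero_r; reflexivity.
  - rewrite Nat.add_succ_r; cbn [psum]; rewrite IH, plus_assoc; reflexivity.
Qed.

Lemma psum_as_difference (f : nat -> G) (m j : nat) :
  psum f m = minus (psum f (m + j)) (psum (fun i => f (m + i)%nat) j).
Proof.
  rewrite psum_add; unfold minus; rewrite <- plus_assoc.
  rewrite <- (plus_zero_r (psum f m)) at 1; f_equal; symmetry; apply plus_opp_r.
Qed.

Lemma minus_plus_plus (a b c d : G) : minus (plus a b) (plus c d) = plus (minus a c) (minus b d).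
Proof.
  unfold minus; rewrite opp_plus, <- !plus_assoc; f_equal.
  rewrite !plus_assoc; f_equal; apply plus_comm.
Qed.

Definition shift_diff (a b : nat -> G) (m n : nat) : G :=
  minus (a n) (if (m <=? n)%nat then b (n - m)%nat else zero).

Lemma psum_shift_diff (a b : nat -> G) (m N : nat) :
  psum (shift_diff a b m) N = minus (psum a N) (psum b (N - m)).
Proof.
  induction N as [|N IH]; cbn [psum].
  - symmetry; apply minus_eq_zero.
  - rewrite IH; unfold shift_diff.
    destruct (Nat.leb_spec m N).
    + replace (S N - m)%nat with (S (N - m)) by lia; cbn [psum].
      rewrite minus_plus_plus; reflexivity.
    + replace (S N - m)%nat with (N - m)%nat by lia.
      rewrite <- (plus_zero_r (psum b (N - m))) at 2; rewrite minus_plus_plus; reflexivity.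
Qed.

End Partial_sums.

Section Normed_partial_sums.

Context {K : AbsRing} {V : NormedModule K}.

Lemma psum_tendsto (f : nat -> V) (s : V) : is_series f s ->
  forall e, 0 < e -> exists N0, forall N, (N0 <= N)%nat -> norm (minus (psum f N) s) < e.
Proof.
  intros Hf e He.
  destruct (proj1 (filterlim_locally_ball_norm _ _) Hf (mkposreal e He)) as [N1 HN1].
  exists (S N1); intros [|N] HN; [lia|].
  rewrite psum_S; apply HN1; lia.
Qed.

Lemma norm_minus_le (x y : V) : norm (minus x y) <= norm x + norm y.
Proof. rewrite <- (norm_opp y); apply norm_triangle. Qed.

Lemma psum_shift_diff_small (a b : nat -> V) (s : V) (m : nat) :
  is_series a s -> is_series b s ->
  forall e, 0 < e -> exists N0, forall N, (N0 <= N)%nat -> norm (psum (shift_diff a b m) N) < e.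
Proof.
  intros Ha Hb e He.
  destruct (psum_tendsto a s Ha (e / 2)) as [Na HNa]; [lra|].
  destruct (psum_tendsto b s Hb (e / 2)) as [Nb HNb]; [lra|].
  exists (Na + Nb + m)%nat; intros N HN.
  rewrite psum_shift_diff, (minus_trans s).
  rewrite <- opp_minus with (x := psum b (N - m)).
  eapply Rle_lt_trans; [apply norm_triangle|]; rewrite norm_opp.
  specialize (HNa N ltac:(lia)); specialize (HNb (N - m)%nat ltac:(lia)); lra.
Qed.

Lemma psum_geometric_bound (g : nat -> V) (M r : R) :
  0 <= r < 1 -> (forall j, norm (g j) <= M * r ^ j) -> forall j, norm (psum g j) <= M / (1 - r).
Proof.
  intros Hr Hg.
  assert (HM : 0 <= M) by (specialize (Hg O); pose proof (norm_ge_0 (g O)); simpl in Hg; lra).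
  assert (Hj : forall j, norm (psum g j) <= M * (1 - r ^ j) / (1 - r)).
  { induction j as [|j IH].
    - replace (norm (psum g 0)) with 0 by (symmetry; apply norm_zero).
      apply Req_le; field; lra.
    - cbn [psum]; eapply Rle_trans; [apply norm_triangle|].
      replace (M * (1 - r ^ S j) / (1 - r)) with (M * (1 - r ^ j) / (1 - r) + M * r ^ j)
        by (simpl; field; lra).
      specialize (Hg j); lra. }
  intros j; eapply Rle_trans; [apply Hj|].
  unfold Rdiv; apply Rmult_le_compat_r; [apply Rlt_le, Rinv_0_lt_compat; lra|].
  pose proof (pow_le r j (proj1 Hr)); nra.
Qed.

Lemma psum_le_of_tail (f : nat -> V) (n : nat) (M r : R) :
  0 <= r < 1 -> (forall j, norm (f (n + j)%nat) <= M * r ^ j) ->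
  (forall e, 0 < e -> exists N0, forall N, (N0 <= N)%nat -> norm (psum f N) < e) ->
  norm (psum f n) <= M / (1 - r).
Proof.
  intros Hr Htail Hsmall; apply le_epsilon; intros e He.
  destruct (Hsmall e He) as [N0 HN0].
  pose proof (psum_geometric_bound _ M r Hr Htail N0) as Hg.
  specialize (HN0 (n + N0)%nat ltac:(lia)).
  rewrite (psum_as_difference f n N0); eapply Rle_trans; [apply norm_minus_le|]; lra.
Qed.

End Normed_partial_sums.

Lemma Cpowz_nat (z : C) (k : Z) :
  Cpowz z k = if (0 <=? k)%Z then (z ^ Z.to_nat k)%C else Cinv (z ^ Z.to_nat (- k))%C.
Proof. destruct k; reflexivity. Qed.

Lemma Cpowz_succ (z : C) (k : Z) : z <> RtoC 0 -> Cpowz z (k + 1) = (Cpowz z k * z)%C.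
Proof.
  intros Hz; rewrite !Cpowz_nat.
  destruct (Z.leb_spec 0 k), (Z.leb_spec 0 (k + 1)); try lia.
  - replace (Z.to_nat (k + 1)) with (Z.to_nat k + 1)%nat by lia.
    rewrite Cpow_add_r, Cpow_1_r; reflexivity.
  - replace k with (-1)%Z by lia; simpl; field.
    intros E; apply Hz; rewrite <- E; ring.
  - replace (Z.to_nat (- k)) with (Z.to_nat (- (k + 1)) + 1)%nat by lia.
    rewrite Cpow_add_r, Cpow_1_r; field; split; [exact Hz | apply Cpow_nz, Hz].
Qed.

Lemma Cpowz_add_nat (z : C) (k : Z) (i : nat) :
  z <> RtoC 0 -> Cpowz z (k + Z.of_nat i) = (Cpowz z k * z ^ i)%C.
Proof.
  intros Hz; induction i as [|i IH].
  - rewrite Z.add_0_r; simpl; ring.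
  - rewrite Nat2Z.inj_succ, <- Z.add_1_r, Z.add_assoc, Cpowz_succ, IH by exact Hz.
    replace (S i) with (i + 1)%nat by lia; rewrite Cpow_add_r, Cpow_1_r; ring.
Qed.

Lemma Cpowz_neq_0 (z : C) (k : Z) : z <> RtoC 0 -> Cpowz z k <> RtoC 0.
Proof.
  intros Hz; rewrite Cpowz_nat; destruct (0 <=? k)%Z; [apply Cpow_nz, Hz|].
  intros E; pose proof (Cinv_l _ (Cpow_nz z (Z.to_nat (- k)) Hz)) as H1.
  rewrite E, Cmult_0_l in H1; injection H1; lra.
Qed.

(** * Interval evaluation of integer linear forms *)

Definition box := (Z * Z)%type.
Definition box3 := (box * box * box)%type.
Definition scale : Z := 100000.
Definition in_box (B : box) (u : R) : Prop := IZR (fst B) <= IZR scale * u <= IZR (snd B).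
Definition in_box3 (B : box3) (u1 u2 u3 : R) : Prop :=
  let '(B1, B2, B3) := B in in_box B1 u1 /\ in_box B2 u2 /\ in_box B3 u3.

Definition lin (c0 c1 c2 c3 : Z) (u1 u2 u3 : R) : R :=
  IZR c0 + IZR c1 * u1 + IZR c2 * u2 + IZR c3 * u3.

Definition term_lo (c : Z) (B : box) : Z := Z.min (c * fst B) (c * snd B).
Definition term_hi (c : Z) (B : box) : Z := Z.max (c * fst B) (c * snd B).
Definition lin_lo (c0 c1 c2 c3 : Z) (B : box3) : Z :=
  let '(B1, B2, B3) := B in (scale * c0 + term_lo c1 B1 + term_lo c2 B2 + term_lo c3 B3)%Z.
Definition lin_hi (c0 c1 c2 c3 : Z) (B : box3) : Z :=
  let '(B1, B2, B3) := B in (scale * c0 + term_hi c1 B1 + term_hi c2 B2 + term_hi c3 B3)%Z.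

Lemma scaled_term_in_range (c : Z) (B : box) (u : R) :
  in_box B u -> IZR (term_lo c B) <= IZR scale * (IZR c * u) <= IZR (term_hi c B).
Proof.
  destruct B as [lo hi]; unfold in_box, term_lo, term_hi; simpl; intros Hu.
  destruct (Z.min_spec (c * lo) (c * hi)) as [[Hm ->] | [Hm ->]];
  destruct (Z.max_spec (c * lo) (c * hi)) as [[HM ->] | [HM ->]];
  first [apply IZR_lt in Hm | apply IZR_le in Hm]; first [apply IZR_lt in HM | apply IZR_le in HM];
  rewrite !mult_IZR in *; destruct (Rle_dec 0 (IZR c)); split; nra.
Qed.

Lemma scaled_lin_in_range (c0 c1 c2 c3 : Z) (B : box3) (u1 u2 u3 : R) :
  in_box3 B u1 u2 u3 ->
  IZR (lin_lo c0 c1 c2 c3 B) <= IZR scale * lin c0 c1 c2 c3 u1 u2 u3 <= IZR (lin_hi c0 c1 c2 c3 B).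
Proof.
  destruct B as [[B1 B2] B3]; intros (H1 & H2 & H3).
  pose proof (scaled_term_in_range c1 _ _ H1). pose proof (scaled_term_in_range c2 _ _ H2).
  pose proof (scaled_term_in_range c3 _ _ H3).
  unfold lin, lin_lo, lin_hi; rewrite !plus_IZR, mult_IZR; split; nra.
Qed.

Definition exceeds (p q c0 c1 c2 c3 : Z) (B : box3) : bool :=
  (p * scale <? q * lin_lo c0 c1 c2 c3 B)%Z || (q * lin_hi c0 c1 c2 c3 B <? - (p * scale))%Z.

Lemma exceeds_false (p q c0 c1 c2 c3 : Z) (B : box3) (u1 u2 u3 : R) :
  (0 < q)%Z -> in_box3 B u1 u2 u3 -> Rabs (lin c0 c1 c2 c3 u1 u2 u3) <= IZR p / IZR q ->
  exceeds p q c0 c1 c2 c3 B = false.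
Proof.
  intros Hq%IZR_lt HB Hv; apply not_true_is_false; intros Hex; revert Hv; apply Rlt_not_le.
  pose proof (scaled_lin_in_range c0 c1 c2 c3 _ _ _ _ HB) as [Hlo Hhi].
  set (v := lin c0 c1 c2 c3 u1 u2 u3) in *.
  apply Rmult_lt_reg_r with (IZR q); [exact Hq|].
  unfold Rdiv; rewrite Rmult_assoc, Rinv_l, Rmult_1_r by lra.
  apply orb_true_iff in Hex as [Hex | Hex]; apply Z.ltb_lt, IZR_lt in Hex;
    rewrite ?opp_IZR, !mult_IZR in Hex; unfold scale in *.
  - pose proof (Rmult_le_compat_l _ _ _ (Rlt_le _ _ Hq) Hlo).
    pose proof (Rle_abs v). nra.
  - pose proof (Rmult_le_compat_l _ _ _ (Rlt_le _ _ Hq) Hhi).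
    pose proof (Rle_abs (- v)). rewrite Rabs_Ropp in *. nra.
Qed.

(** * Enclosures of the conjugates [β2] and [β3] *)

Lemma PR_negative_root_bounds (t : R) : PR t = 0 -> t < 0 -> -0.77485 <= t <= -0.77475.
Proof.
  unfold PR; intros H Ht; split.
  - destruct (Rle_dec t (-0.77485)); [|lra].
    set (s := -0.77485 - t) in *. replace t with (-0.77485 - s) in H by (unfold s; ring).
    assert (0 <= s) by (unfold s; lra). nra.
  - destruct (Rle_dec t (-0.77475)); [lra|].
    set (s := t + 0.77475) in *. replace t with (s - 0.77475) in H by (unfold s; ring).
    assert (0 < s <= 0.77475) by (unfold s; lra). nra.
Qed.

(* Eliminating [y] from [PC (x, y) = 0] with [y <> 0] leaves [sextic x = 0]. *)
Definition sextic (x : R) : R := 1 + 12*x - 16*x^2 - 24*x^3 - 16*x^4 + 96*x^5 - 64*x^6.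

Lemma sextic_neg_left (x : R) : x <= -0.07639 -> sextic x < 0.
Proof.
  unfold sextic; intros H; set (s := -0.07639 - x).
  replace x with (-0.07639 - s) by (unfold s; ring).
  assert (0 <= s) by (unfold s; lra); nra.
Qed.

Lemma sextic_pos (x : R) : -0.07637 <= x <= 1/4 -> 0 < sextic x.
Proof.
  unfold sextic; intros H. destruct (Rle_dec x 0).
  - set (s := x + 0.07637). replace x with (s - 0.07637) by (unfold s; ring).
    assert (0 <= s <= 0.07637) by (unfold s; lra).
    assert (s^2 <= s/10) by nra. assert (s^3 <= s^2/10) by nra. assert (s^4 <= s^3/10) by nra.
    assert (s^6 <= s^4) by nra. assert (0 <= s^5) by nra. lra.
  - assert (x^2 <= x/4) by nra. assert (x^3 <= x^2/4) by nra. assert (x^4 <= x^3/4) by nra.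
    assert (x^6 <= x^4) by nra. assert (0 <= x^5) by nra. lra.
Qed.

Lemma sextic_neg_right (x : R) : 1/4 <= x -> 1 + 2*x + 3*x^2 - 4*x^3 < 0 -> sextic x < 0.
Proof.
  unfold sextic; intros H1 H2.
  assert (H : 5/4 <= x) by nra.
  set (s := x - 5/4). replace x with (s + 5/4) by (unfold s; ring).
  assert (0 <= s) by (unfold s; lra). nra.
Qed.

Lemma PC_re_im (x y : R) : PC (x, y) = RtoC 0 ->
  x^4 - 6*x^2*y^2 + y^4 - (x^3 - 3*x*y^2) - (x^2 - y^2) - x - 1 = 0 /\
  y * (4*x^3 - 4*x*y^2 - 3*x^2 + y^2 - 2*x - 1) = 0.
Proof.
  unfold PC; intros H; injection H as Hre Him; simpl in Hre, Him.
  split; [rewrite <- Hre | rewrite <- Him]; ring.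
Qed.

Lemma nonreal_root_re_bounds (x y : R) : PC (x, y) = RtoC 0 -> 0 < y ->
  -0.07639 <= x <= -0.07637 /\ y^2 * (1 - 4*x) = 1 + 2*x + 3*x^2 - 4*x^3.
Proof.
  intros H Hy; destruct (PC_re_im x y H) as [Hre Him].
  assert (HY : y^2 * (1 - 4*x) = 1 + 2*x + 3*x^2 - 4*x^3).
  { apply Rmult_integral in Him as [Him | Him]; lra. }
  split; [|exact HY].
  assert (Hs : sextic x = 0).
  { set (Y := y^2) in *. set (N := 1 + 2*x + 3*x^2 - 4*x^3) in *.
    assert (HQ : Y^2 + Y*(-6*x^2+3*x+1) + (x^4-x^3-x^2-x-1) = 0)
      by (rewrite <- Hre; unfold Y; ring).
    transitivity ((1-4*x)^2*(Y^2 + Y*(-6*x^2+3*x+1) + (x^4-x^3-x^2-x-1))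
       - (Y*(1-4*x)-N)*(Y*(1-4*x)+N+(1-4*x)*(-6*x^2+3*x+1))).
    - unfold sextic, N; ring.
    - rewrite HQ, HY; ring. }
  assert (0 < y^2) by nra.
  destruct (Rle_dec x (1/4)) as [Hx | Hx].
  - destruct (Rle_dec x (-0.07639)) as [h | h]; [pose proof (sextic_neg_left x h); lra|].
    destruct (Rle_dec (-0.07637) x) as [h' | h']; [pose proof (sextic_pos x (conj h' Hx)); lra|].
    lra.
  - assert (1 + 2*x + 3*x^2 - 4*x^3 < 0) by nra.
    pose proof (sextic_neg_right x ltac:(lra) ltac:(assumption)); lra.
Qed.

(* Enclosures, scaled by [scale], of [t], [t^2], [t^3] for [t = β2] and of the real and
   imaginary parts of [z], [z^2], [z^3] for [z = β3]. *)
Definition beta2_boxes : box3 := ((-77485, -77475), (60023, 60040), (-46522, -46502))%Z.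
Definition beta3_re_boxes : box3 := ((-7639, -7637), (-65795, -65785), (15161, 15168))%Z.
Definition beta3_im_boxes : box3 := ((81467, 81473), (-12448, -12443), (-52655, -52642))%Z.

Lemma beta2_enclosure (t : R) : PR t = 0 -> t < 0 -> in_box3 beta2_boxes t (t^2) (t^3).
Proof.
  intros H Ht; pose proof (PR_negative_root_bounds t H Ht).
  unfold in_box3, in_box, scale; simpl; repeat split; nra.
Qed.

Lemma beta3_enclosure (z : C) : PC z = RtoC 0 -> 0 < Im z ->
  in_box3 beta3_re_boxes (Re z) (Re (z^2)) (Re (z^3)) /\
  in_box3 beta3_im_boxes (Im z) (Im (z^2)) (Im (z^3)).
Proof.
  destruct z as [x y]; simpl Im; intros H Hy.
  destruct (nonreal_root_re_bounds x y H Hy) as [Hx HY].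
  assert (Hx2 : 0.0058323 <= x^2 <= 0.0058355) by nra.
  assert (Hx3 : -0.00044577 <= x^3 <= -0.00044541)
    by (replace (x^3) with (x * x^2) by ring; split; nra).
  assert (Hy2 : 0.66369 <= y^2 <= 0.66378).
  { split; apply Rnot_lt_le; intro C.
    - assert (y^2 * (1 - 4*x) < 0.66369 * (1 - 4*x)) by (apply Rmult_lt_compat_r; lra). lra.
    - assert (0.66378 * (1 - 4*x) < y^2 * (1 - 4*x)) by (apply Rmult_lt_compat_r; lra). lra. }
  assert (0.81467 <= y <= 0.81473) by (split; nra).
  unfold in_box3, in_box, scale; simpl; repeat split; nra.
Qed.

(** * Carries *)

(* [(a0, a1, a2, a3)] stands for [a0 + a1 α + a2 α^2 + a3 α^3]. *)
Definition carry := (Z * Z * Z * Z)%type.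

(* Dividing [a + d] by [α], using [α^4 = 1 + α + α^2 + α^3]. *)
Definition carry_step (a : carry) (d : Z) : carry :=
  let '(a0, a1, a2, a3) := a in let e := (a0 + d)%Z in ((a1 - e)%Z, (a2 - e)%Z, (a3 - e)%Z, e).

Definition carry_value_R (t : R) (a : carry) : R :=
  let '(a0, a1, a2, a3) := a in lin a0 a1 a2 a3 t (t^2) (t^3).

Definition carry_value_C (z : C) (a : carry) : C :=
  let '(a0, a1, a2, a3) := a in
  (RtoC (IZR a0) + RtoC (IZR a1) * z + RtoC (IZR a2) * z^2 + RtoC (IZR a3) * z^3)%C.

Lemma carry_value_R_step (t : R) (a : carry) (d : Z) : PR t = 0 ->
  t * carry_value_R t (carry_step a d) = carry_value_R t a + IZR d.
Proof.
  destruct a as [[[a0 a1] a2] a3]; unfold PR, carry_value_R, carry_step, lin; intros H.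
  rewrite !minus_IZR, plus_IZR.
  transitivity (IZR a0 + IZR a1 * t + IZR a2 * t^2 + IZR a3 * t^3 + IZR d
                + (IZR a0 + IZR d) * (t^4 - t^3 - t^2 - t - 1)); [ring|].
  rewrite H; ring.
Qed.

Lemma carry_value_C_step (z : C) (a : carry) (d : Z) : PC z = RtoC 0 ->
  (z * carry_value_C z (carry_step a d) = carry_value_C z a + RtoC (IZR d))%C.
Proof.
  destruct a as [[[a0 a1] a2] a3]; unfold PC, carry_value_C, carry_step; intros H.
  rewrite !minus_IZR, plus_IZR, !RtoC_minus, !RtoC_plus.
  transitivity (RtoC (IZR a0) + RtoC (IZR a1) * z + RtoC (IZR a2) * z^2 + RtoC (IZR a3) * z^3
                + RtoC (IZR d) + (RtoC (IZR a0) + RtoC (IZR d)) * (z^4 - z^3 - z^2 - z - RtoC 1))%C;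
    [ring|].
  rewrite H; ring.
Qed.

Lemma carry_value_C_re_im (z : C) (a0 a1 a2 a3 : Z) :
  Re (carry_value_C z (a0, a1, a2, a3)) = lin a0 a1 a2 a3 (Re z) (Re (z^2)) (Re (z^3)) /\
  Im (carry_value_C z (a0, a1, a2, a3)) = lin 0 a1 a2 a3 (Im z) (Im (z^2)) (Im (z^3)).
Proof. destruct z as [x y]; unfold lin; simpl; split; ring. Qed.

Lemma Rabs_Im_le_Cmod (c : C) : Rabs (Im c) <= Cmod c.
Proof.
  pose proof (Cmod2_alt c). pose proof (Cmod_ge_0 c). pose proof (pow2_abs (Im c)).
  pose proof (Rabs_pos (Im c)). nra.
Qed.

Definition admissible (a : carry) : bool :=
  let '(a0, a1, a2, a3) := a in
  negb (exceeds 40 9 a0 a1 a2 a3 beta2_boxes || exceeds 20 3 a0 a1 a2 a3 beta3_re_boxes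
        || exceeds 20 3 0 a1 a2 a3 beta3_im_boxes).

Lemma admissible_of_bounds (t : R) (z : C) (a : carry) :
  in_box3 beta2_boxes t (t^2) (t^3) ->
  in_box3 beta3_re_boxes (Re z) (Re (z^2)) (Re (z^3)) ->
  in_box3 beta3_im_boxes (Im z) (Im (z^2)) (Im (z^3)) ->
  Rabs (carry_value_R t a) <= 40/9 -> Cmod (carry_value_C z a) <= 20/3 -> admissible a = true.
Proof.
  destruct a as [[[a0 a1] a2] a3]; intros Ht Hre Him HR HC.
  destruct (carry_value_C_re_im z a0 a1 a2 a3) as [Ere Eim].
  pose proof (Rle_trans _ _ _ (re_le_Cmod _) HC) as HCre.
  pose proof (Rle_trans _ _ _ (Rabs_Im_le_Cmod _) HC) as HCim.
  rewrite Ere in HCre; rewrite Eim in HCim.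
  unfold admissible; cbn [carry_value_R] in HR.
  rewrite (exceeds_false _ _ _ _ _ _ _ t (t^2) (t^3)),
    (exceeds_false _ _ _ _ _ _ _ (Re z) (Re (z^2)) (Re (z^3))),
    (exceeds_false _ _ _ _ _ _ _ (Im z) (Im (z^2)) (Im (z^3))) by first [lia | assumption].
  reflexivity.
Qed.

Definition Zdigit (b : bool) : Z := if b then 1%Z else 0%Z.

(* [ε'_(l+n) - ε_(l+n)], where [ε_i] counts as [0] for [i < 4]. *)
Definition digit_diff (eps eps' : Z -> bool) (l : Z) (n : nat) : Z :=
  (Zdigit (eps' (l + Z.of_nat n))
   - if (Z.to_nat (4 - l) <=? n)%nat then Zdigit (eps (l + Z.of_nat n)) else 0)%Z.

Fixpoint carry_seq (eps eps' : Z -> bool) (l : Z) (n : nat) : carry :=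
  match n with
  | O => (0, 0, 0, 0)%Z
  | S k => carry_step (carry_seq eps eps' l k) (digit_diff eps eps' l k)
  end.

Lemma digit_diff_range (eps eps' : Z -> bool) (l : Z) (n : nat) :
  (-1 <= digit_diff eps eps' l n <= 1)%Z.
Proof.
  unfold digit_diff, Zdigit.
  destruct (eps' (l + Z.of_nat n)%Z), (Z.to_nat (4 - l) <=? n)%nat, (eps (l + Z.of_nat n)%Z); lia.
Qed.

Lemma IZR_digit_diff_le (eps eps' : Z -> bool) (l : Z) (n : nat) :
  Rabs (IZR (digit_diff eps eps' l n)) <= 1.
Proof.
  destruct (digit_diff_range eps eps' l n) as [H1 H2].
  apply IZR_le in H1; apply IZR_le in H2; apply Rabs_le; lra.
Qed.

Lemma term_R_shift_diff (b2 : R) (eps eps' : Z -> bool) (l : Z) (n : nat) : (l < 4)%Z ->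
  shift_diff (term_R b2 l eps') (term_R b2 4 eps) (Z.to_nat (4 - l)) n
  = IZR (digit_diff eps eps' l n) * powerRZ b2 (l + Z.of_nat n).
Proof.
  intros Hl.
  transitivity (term_R b2 l eps' n
    - if (Z.to_nat (4 - l) <=? n)%nat then term_R b2 4 eps (n - Z.to_nat (4 - l)) else 0);
    [reflexivity|].
  unfold digit_diff, term_R; destruct (Nat.leb_spec (Z.to_nat (4 - l)) n).
  - replace (4 + Z.of_nat (n - Z.to_nat (4 - l)))%Z with (l + Z.of_nat n)%Z by lia.
    unfold digit, Zdigit; destruct (eps' (l + Z.of_nat n)%Z), (eps (l + Z.of_nat n)%Z); simpl; ring.
  - unfold digit, Zdigit; destruct (eps' (l + Z.of_nat n)%Z); simpl; ring.
Qed.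

Lemma term_C_shift_diff (b3 : C) (eps eps' : Z -> bool) (l : Z) (n : nat) : (l < 4)%Z ->
  shift_diff (term_C b3 l eps') (term_C b3 4 eps) (Z.to_nat (4 - l)) n
  = (RtoC (IZR (digit_diff eps eps' l n)) * Cpowz b3 (l + Z.of_nat n))%C.
Proof.
  intros Hl.
  transitivity (term_C b3 l eps' n
    - if (Z.to_nat (4 - l) <=? n)%nat then term_C b3 4 eps (n - Z.to_nat (4 - l)) else RtoC 0)%C;
    [reflexivity|].
  unfold digit_diff, term_C; destruct (Nat.leb_spec (Z.to_nat (4 - l)) n).
  - replace (4 + Z.of_nat (n - Z.to_nat (4 - l)))%Z with (l + Z.of_nat n)%Z by lia.
    unfold digit, Zdigit; destruct (eps' (l + Z.of_nat n)%Z), (eps (l + Z.of_nat n)%Z); simpl; ring.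
  - unfold digit, Zdigit; destruct (eps' (l + Z.of_nat n)%Z); simpl; ring.
Qed.

Lemma psum_carry_R (b2 : R) (eps eps' : Z -> bool) (l : Z) (N : nat) :
  PR b2 = 0 -> b2 <> 0 -> (l < 4)%Z ->
  psum (shift_diff (term_R b2 l eps') (term_R b2 4 eps) (Z.to_nat (4 - l))) N
  = powerRZ b2 (l + Z.of_nat N) * carry_value_R b2 (carry_seq eps eps' l N) :> R.
Proof.
  intros HP Hb Hl; induction N as [|N IH].
  - transitivity 0; [reflexivity | unfold carry_value_R, lin; simpl; ring].
  - cbn [psum carry_seq]; rewrite IH, term_R_shift_diff by exact Hl.
    rewrite Nat2Z.inj_succ, <- Z.add_1_r, Z.add_assoc, (powerRZ_add b2 _ 1) by exact Hb.
    replace (powerRZ b2 1) with b2 by (simpl; ring).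
    rewrite (Rmult_assoc (powerRZ b2 (l + Z.of_nat N))), carry_value_R_step by exact HP.
    change (plus ?x ?y) with (x + y); ring.
Qed.

Lemma psum_carry_C (b3 : C) (eps eps' : Z -> bool) (l : Z) (N : nat) :
  PC b3 = RtoC 0 -> b3 <> RtoC 0 -> (l < 4)%Z ->
  psum (shift_diff (term_C b3 l eps') (term_C b3 4 eps) (Z.to_nat (4 - l))) N
  = (Cpowz b3 (l + Z.of_nat N) * carry_value_C b3 (carry_seq eps eps' l N))%C :> C.
Proof.
  intros HP Hb Hl; induction N as [|N IH].
  - transitivity (RtoC 0); [reflexivity | unfold carry_value_C; simpl; ring].
  - cbn [psum carry_seq]; rewrite IH, term_C_shift_diff by exact Hl.
    rewrite Nat2Z.inj_succ, <- Z.add_1_r, Z.add_assoc, Cpowz_succ by exact Hb.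
    rewrite <- (Cmult_assoc (Cpowz b3 (l + Z.of_nat N))), carry_value_C_step by exact HP.
    change (plus ?x ?y) with (x + y)%C; ring.
Qed.

Lemma digit_geometric_le (d c t r : R) (j : nat) :
  Rabs d <= 1 -> 0 <= c -> 0 <= t -> t <= r -> Rabs d * (c * t ^ j) <= c * r ^ j.
Proof.
  intros Hd Hc Ht Htr.
  pose proof (pow_incr t r j (conj Ht Htr)); pose proof (pow_le t j Ht).
  pose proof (Rabs_pos d).
  assert (c * t ^ j <= c * r ^ j) by (apply Rmult_le_compat_l; lra).
  assert (0 <= c * t ^ j) by (apply Rmult_le_pos; lra).
  nra.
Qed.

Lemma carry_value_R_bound (b2 r : R) (eps eps' : Z -> bool) (l : Z) (sR : R) :
  PR b2 = 0 -> b2 <> 0 -> Rabs b2 <= r -> r < 1 -> (l < 4)%Z ->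
  is_series (term_R b2 4 eps) sR -> is_series (term_R b2 l eps') sR ->
  forall n, Rabs (carry_value_R b2 (carry_seq eps eps' l n)) <= 1 / (1 - r).
Proof.
  intros HP Hb Hr Hr1 Hl HR HR' n.
  set (c := powerRZ b2 (l + Z.of_nat n)).
  assert (Hc : 0 < Rabs c) by (apply Rabs_pos_lt, powerRZ_NOR, Hb).
  assert (Htail : forall j, Rabs (shift_diff (term_R b2 l eps') (term_R b2 4 eps)
                                   (Z.to_nat (4 - l)) (n + j)) <= Rabs c * r ^ j).
  { intros j; rewrite term_R_shift_diff, Nat2Z.inj_add, Z.add_assoc, powerRZ_add, <- pow_powerRZ
      by assumption.
    rewrite !Rabs_mult, <- RPow_abs; fold c.
    apply digit_geometric_le; auto using IZR_digit_diff_le, Rabs_pos. }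
  pose proof (@psum_le_of_tail R_AbsRing R_NormedModule _ n _ r
                (conj (Rle_trans _ _ _ (Rabs_pos b2) Hr) Hr1) Htail
                (psum_shift_diff_small _ _ _ _ HR' HR)) as Hsum.
  change norm with Rabs in Hsum.
  rewrite psum_carry_R, Rabs_mult in Hsum by assumption; fold c in Hsum.
  apply Rmult_le_reg_l with (Rabs c); [exact Hc|].
  unfold Rdiv in *; lra.
Qed.

Lemma carry_value_C_bound (b3 : C) (r : R) (eps eps' : Z -> bool) (l : Z) (sC : C) :
  PC b3 = RtoC 0 -> b3 <> RtoC 0 -> Cmod b3 <= r -> r < 1 -> (l < 4)%Z ->
  is_series (term_C b3 4 eps) sC -> is_series (term_C b3 l eps') sC ->
  forall n, Cmod (carry_value_C b3 (carry_seq eps eps' l n)) <= 1 / (1 - r).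
Proof.
  intros HP Hb Hr Hr1 Hl HC HC' n.
  set (c := Cpowz b3 (l + Z.of_nat n)).
  assert (Hc : 0 < Cmod c) by (apply Cmod_gt_0, Cpowz_neq_0, Hb).
  assert (Htail : forall j, Cmod (shift_diff (term_C b3 l eps') (term_C b3 4 eps)
                                   (Z.to_nat (4 - l)) (n + j)) <= Cmod c * r ^ j).
  { intros j; rewrite term_C_shift_diff, Nat2Z.inj_add, Z.add_assoc, Cpowz_add_nat
      by assumption.
    rewrite !Cmod_mult, Cmod_pow, Cmod_R; fold c.
    apply digit_geometric_le; auto using IZR_digit_diff_le, Cmod_ge_0. }
  pose proof (@psum_le_of_tail C_AbsRing C_NormedModule _ n _ r
                (conj (Rle_trans _ _ _ (Cmod_ge_0 b3) Hr) Hr1) Htail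
                (psum_shift_diff_small _ _ _ _ HC' HC)) as Hsum.
  change norm with Cmod in Hsum.
  rewrite psum_carry_C, Cmod_mult in Hsum by assumption; fold c in Hsum.
  apply Rmult_le_reg_l with (Cmod c); [exact Hc|].
  unfold Rdiv in *; lra.
Qed.

(** * The finite set of carries *)

Definition carry_eqb (a b : carry) : bool :=
  let '(a0, a1, a2, a3) := a in let '(b0, b1, b2, b3) := b in
  (a0 =? b0)%Z && (a1 =? b1)%Z && (a2 =? b2)%Z && (a3 =? b3)%Z.

Lemma carry_eqb_eq (a b : carry) : carry_eqb a b = true <-> a = b.
Proof.
  destruct a as [[[a0 a1] a2] a3], b as [[[b0 b1] b2] b3]; simpl.
  rewrite !andb_true_iff, !Z.eqb_eq; split.
  - intros [[[-> ->] ->] ->]; reflexivity.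
  - intros E; injection E as -> -> -> ->; tauto.
Qed.

Definition mem (s : list carry) (a : carry) : bool := existsb (carry_eqb a) s.

Lemma mem_In (s : list carry) (a : carry) : mem s a = true <-> In a s.
Proof.
  unfold mem; rewrite existsb_exists; split.
  - intros (b & Hb & E); apply carry_eqb_eq in E; subst; exact Hb.
  - intros Ha; exists a; split; [exact Ha | apply carry_eqb_eq; reflexivity].
Qed.

Definition successors (a : carry) : list carry := map (carry_step a) [-1; 0; 1]%Z.

(* Any result will do: [reachable_closed] checks that it contains every admissible successor
   of its elements. *)
Fixpoint explore (fuel : nat) (s : list carry) : list carry :=
  match fuel with
  | O => s
  | S f =>
      explore f (fold_left (fun t b => if admissible b && negb (mem t b) then b :: t else t)
                           (flat_map successors s) s)
  end.

Definition reachable : list carry := Eval vm_compute in explore 40 [(0, 0, 0, 0)%Z].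

Lemma reachable_closed :
  forallb (fun a => forallb (fun b => mem reachable b || negb (admissible b)) (successors a))
          reachable = true.
Proof. vm_compute; reflexivity. Qed.

Definition prune (s : list carry) : list carry :=
  filter (fun a => existsb (mem s) (successors a)) s.

(* Sixteen rounds leave exactly the carries lying on an infinite path inside [reachable]. *)
Definition alive : list carry := Nat.iter 16 prune reachable.

Section Paths.

Variable path : nat -> carry.
Hypothesis path_step : forall n, In (path (S n)) (successors (path n)).

Lemma path_reachable : mem reachable (path 0) = true -> (forall n, admissible (path n) = true) ->
  forall n, mem reachable (path n) = true.
Proof.
  intros H0 Hadm; induction n as [|n IH]; [exact H0|].
  pose proof reachable_closed as Hc; rewrite forallb_forall in Hc.
  specialize (Hc (path n) (proj1 (mem_In _ _) IH)); rewrite forallb_forall in Hc.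
  specialize (Hc _ (path_step n)); rewrite Hadm in Hc.
  rewrite orb_false_r in Hc; exact Hc.
Qed.

Lemma path_prune (s : list carry) : (forall n, mem s (path n) = true) ->
  forall n, mem (prune s) (path n) = true.
Proof.
  intros Hs n; apply mem_In, filter_In; split; [apply mem_In, Hs|].
  apply existsb_exists; exists (path (S n)); split; [apply path_step | apply Hs].
Qed.

Lemma path_alive : (forall n, mem reachable (path n) = true) -> forall n, mem alive (path n) = true.
Proof.
  intros Hr; unfold alive; generalize 16%nat; intros k.
  induction k as [|k IH]; [exact Hr|].
  apply path_prune, IH.
Qed.

End Paths.

Lemma carry_seq_step (eps eps' : Z -> bool) (l : Z) (n : nat) :
  In (carry_seq eps eps' l (S n)) (successors (carry_seq eps eps' l n)).
Proof.
  cbn [carry_seq]; apply in_map; pose proof (digit_diff_range eps eps' l n).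
  simpl; lia.
Qed.

Lemma carry_seq_alive (b2 : R) (b3 : C) (eps eps' : Z -> bool) (l : Z) (sR : R) (sC : C) :
  PR b2 = 0 -> b2 < 0 -> PC b3 = RtoC 0 -> 0 < Im b3 -> (l < 4)%Z ->
  is_series (term_R b2 4 eps) sR -> is_series (term_R b2 l eps') sR ->
  is_series (term_C b3 4 eps) sC -> is_series (term_C b3 l eps') sC ->
  forall n, mem alive (carry_seq eps eps' l n) = true.
Proof.
  intros HPR Hb2 HPC Hb3 Hl HR HR' HC HC'.
  pose proof (beta2_enclosure b2 HPR Hb2) as Eb2.
  destruct (beta3_enclosure b3 HPC Hb3) as [Ere Eim].
  assert (Hr2 : Rabs b2 <= 31/40).
  { destruct Eb2 as [[H1 H2] _]; unfold scale in *; simpl in *; apply Rabs_le; lra. }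
  assert (Hr3 : Cmod b3 <= 17/20).
  { destruct Ere as [[H1 H2] _], Eim as [[H3 H4] _]; unfold scale in *; simpl in *.
    pose proof (Cmod2_alt b3); pose proof (Cmod_ge_0 b3); nra. }
  assert (Hnz3 : b3 <> RtoC 0) by (intros E; rewrite E in Hb3; simpl in Hb3; lra).
  apply path_alive; [apply carry_seq_step|].
  apply path_reachable; [apply carry_seq_step | vm_compute; reflexivity |].
  intros n; apply (admissible_of_bounds b2 b3); try assumption.
  - replace (40/9) with (1 / (1 - 31/40)) by field.
    apply (carry_value_R_bound b2 _ eps eps' l sR); auto; lra.
  - replace (20/3) with (1 / (1 - 17/20)) by field.
    apply (carry_value_C_bound b3 _ eps eps' l sC); auto; lra.
Qed.

Definition run (w : list bool) : carry :=
  fold_left (fun a b => carry_step a (Zdigit b)) w (0, 0, 0, 0)%Z.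

Definition prefix (eps' : Z -> bool) (l : Z) (n : nat) : list bool :=
  map (fun k => eps' (l + Z.of_nat k)%Z) (seq 0 n).

Lemma carry_seq_prefix (eps eps' : Z -> bool) (l : Z) (n : nat) : (Z.of_nat n <= 4 - l)%Z ->
  carry_seq eps eps' l n = run (prefix eps' l n).
Proof.
  induction n as [|n IH]; intros Hn; [reflexivity|].
  cbn [carry_seq]; rewrite IH by lia.
  unfold run, prefix; rewrite seq_S, map_app, fold_left_app; simpl.
  unfold digit_diff; destruct (Nat.leb_spec (Z.to_nat (4 - l)) n); [lia|].
  f_equal; lia.
Qed.

Fixpoint words (n : nat) : list (list bool) :=
  match n with
  | O => [[]]
  | S k => flat_map (fun w => [false :: w; true :: w]) (words k)
  end.

Lemma In_words (w : list bool) : In w (words (length w)).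
Proof.
  induction w as [|b w IH]; simpl; [tauto|].
  apply in_flat_map; exists w; split; [exact IH|]; destruct b; simpl; tauto.
Qed.

Definition no_four_ones (w : list bool) : bool :=
  forallb (fun i => negb (nth i w false && nth (i + 1) w false && nth (i + 2) w false
                          && nth (i + 3) w false))
          (seq 0 (length w)).

Lemma nth_prefix (eps' : Z -> bool) (l : Z) (n i : nat) :
  nth i (prefix eps' l n) false = if (i <? n)%nat then eps' (l + Z.of_nat i)%Z else false.
Proof.
  unfold prefix; destruct (Nat.ltb_spec i n).
  - set (f := fun k : nat => eps' (l + Z.of_nat k)%Z).
    rewrite (nth_indep _ false (f 0%nat)) by (rewrite length_map, length_seq; lia).
    rewrite map_nth, seq_nth by lia; reflexivity.
  - apply nth_overflow; rewrite length_map, length_seq; lia.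
Qed.

Lemma prefix_no_four_ones (eps' : Z -> bool) (l : Z) (n : nat) :
  D_inf l eps' -> no_four_ones (prefix eps' l n) = true.
Proof.
  intros H; unfold no_four_ones; apply forallb_forall; intros i _.
  rewrite !nth_prefix.
  destruct (Nat.ltb_spec (i + 3) n); cbv iota; [|rewrite andb_false_r; reflexivity].
  rewrite !(proj2 (Nat.ltb_lt _ n)) by lia; cbv iota.
  specialize (H (l + Z.of_nat i)%Z ltac:(lia)).
  rewrite !Nat2Z.inj_add, !Z.add_assoc; simpl (Z.of_nat 1); simpl (Z.of_nat 2); simpl (Z.of_nat 3).
  destruct (eps' (l + Z.of_nat i)%Z), (eps' (l + Z.of_nat i + 1)%Z),
    (eps' (l + Z.of_nat i + 2)%Z), (eps' (l + Z.of_nat i + 3)%Z);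
    try reflexivity; exfalso; apply H; auto.
Qed.

Definition alive_words (n : nat) : list (list bool) :=
  filter (fun w => nth 0 w false && no_four_ones w && mem alive (run w)) (words n).

Lemma alive_words_5 : alive_words 5 = [[true; true; false; true; false]].
Proof. vm_compute; reflexivity. Qed.
Lemma alive_words_6 : alive_words 6 = [[true; true; false; true; false; false]].
Proof. vm_compute; reflexivity. Qed.
Lemma alive_words_7 : alive_words 7 = [[true; true; false; true; false; false; true]].
Proof. vm_compute; reflexivity. Qed.
Lemma alive_words_8 : alive_words 8 = [].
Proof. vm_compute; reflexivity. Qed.

Lemma prefix_in_alive_words (eps eps' : Z -> bool) (l : Z) (n : nat) :
  D_inf l eps' -> eps' l = true -> (forall k, mem alive (carry_seq eps eps' l k) = true) ->
  (0 < n)%nat -> (Z.of_nat n <= 4 - l)%Z -> In (prefix eps' l n) (alive_words n).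
Proof.
  intros Hd Hl Halive Hn Hn'; apply filter_In; split.
  - pose proof (In_words (prefix eps' l n)) as Hw.
    unfold prefix in Hw at 2; rewrite length_map, length_seq in Hw; exact Hw.
  - rewrite nth_prefix, prefix_no_four_ones, <- (carry_seq_prefix eps), Halive by assumption.
    destruct (Nat.ltb_spec 0 n); [|lia]; rewrite Z.add_0_r, Hl; reflexivity.
Qed.

Ltac expand_head_sum :=
  unfold head_sum; simpl; unfold RCadd, RCzero, alpha_pow, term_R, term_C, bR, digit; simpl.

Lemma head_sum_m3 (b2 : R) (b3 : C) (eps' : Z -> bool) :
  prefix eps' (-3) 7 = [true; true; false; true; false; false; true] ->
  head_sum b2 b3 (-3) eps' = RCadd (alpha_pow b2 b3 (-3)) (RCadd (alpha_pow b2 b3 (-2))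
                               (RCadd (alpha_pow b2 b3 0) (alpha_pow b2 b3 3))).
Proof.
  intros H; expand_head_sum; cbn in H; injection H as -> -> -> -> -> -> ->.
  f_equal; ring.
Qed.

Lemma head_sum_m2 (b2 : R) (b3 : C) (eps' : Z -> bool) :
  prefix eps' (-2) 6 = [true; true; false; true; false; false] ->
  head_sum b2 b3 (-2) eps' =
  RCadd (alpha_pow b2 b3 (-2)) (RCadd (alpha_pow b2 b3 (-1)) (alpha_pow b2 b3 1)).
Proof.
  intros H; expand_head_sum; cbn in H; injection H as -> -> -> -> -> ->.
  f_equal; ring.
Qed.

Lemma head_sum_m1 (b2 : R) (b3 : C) (eps' : Z -> bool) :
  prefix eps' (-1) 5 = [true; true; false; true; false] ->
  head_sum b2 b3 (-1) eps' =
  RCadd (alpha_pow b2 b3 (-1)) (RCadd (alpha_pow b2 b3 0) (alpha_pow b2 b3 2)).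
Proof.
  intros H; expand_head_sum; cbn in H; injection H as -> -> -> -> ->.
  f_equal; ring.
Qed.

Lemma head_sum_nonneg (b2 : R) (b3 : C) (l : Z) (eps' : Z -> bool) :
  (0 <= l < 4)%Z -> D_inf l eps' -> S_set b2 b3 (head_sum b2 b3 l eps').
Proof.
  intros Hl Hd; left.
  exists ((l <=? 0)%Z && eps' 0%Z), ((l <=? 1)%Z && eps' 1%Z), ((l <=? 2)%Z && eps' 2%Z),
    ((l <=? 3)%Z && eps' 3%Z); split.
  - rewrite !andb_true_iff, !Z.leb_le; intros ([? H0] & [_ H1] & [_ H2] & [_ H3]).
    apply (Hd 0%Z); [lia | auto].
  - left; assert (l = 0 \/ l = 1 \/ l = 2 \/ l = 3)%Z as [-> | [-> | [-> | ->]]] by lia;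
      expand_head_sum; f_equal; ring.
Qed.

Theorem lemma3p5 (b2 : R) (b3 : C)
  (hb2 : PR b2 = 0) (hb2neg : b2 < 0)
  (hb3 : PC b3 = RtoC 0) (hb3im : 0 < Im b3)
  (eps eps' : Z -> bool) (l : Z)
  (heps : D_inf 4 eps) (heps' : D_inf l eps')
  (hl : (l < 4)%Z) (hlead : eps' l = true)
  (sR : R) (sC : C)
  (hR : is_series (term_R b2 4 eps) sR) (hR' : is_series (term_R b2 l eps') sR)
  (hC : is_series (term_C b3 4 eps) sC) (hC' : is_series (term_C b3 l eps') sC) :
  S_set b2 b3 (head_sum b2 b3 l eps') /\
  (-3 <= l)%Z /\
  (l = (-3)%Z -> head_sum b2 b3 l eps' =
     RCadd (alpha_pow b2 b3 (-3)) (RCadd (alpha_pow b2 b3 (-2))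
       (RCadd (alpha_pow b2 b3 0) (alpha_pow b2 b3 3)))) /\
  (l = (-2)%Z -> head_sum b2 b3 l eps' =
     RCadd (alpha_pow b2 b3 (-2)) (RCadd (alpha_pow b2 b3 (-1)) (alpha_pow b2 b3 1))) /\
  (l = (-1)%Z -> head_sum b2 b3 l eps' =
     RCadd (alpha_pow b2 b3 (-1)) (RCadd (alpha_pow b2 b3 0) (alpha_pow b2 b3 2))).
Proof.
  pose proof (carry_seq_alive b2 b3 eps eps' l sR sC hb2 hb2neg hb3 hb3im hl hR hR' hC hC')
    as Halive.
  pose proof (fun n => prefix_in_alive_words eps eps' l n heps' hlead Halive) as Hw.
  destruct (Z_lt_le_dec l 0) as [Hneg | Hnonneg].
  2: split; [apply head_sum_nonneg; auto | repeat split; intros; lia].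
  destruct (Z_le_gt_dec l (-4)) as [Hle | Hgt].
  { specialize (Hw 8%nat ltac:(lia) ltac:(lia)); rewrite alive_words_8 in Hw; destruct Hw. }
  assert (l = -3 \/ l = -2 \/ l = -1)%Z as [-> | [-> | ->]] by lia.
  - specialize (Hw 7%nat ltac:(lia) ltac:(lia)); rewrite alive_words_7 in Hw.
    destruct Hw as [Hw | []]; apply eq_sym, (head_sum_m3 b2 b3) in Hw.
    split; [do 3 right; left; exact Hw | repeat split; intros; (exact Hw || lia)].
  - specialize (Hw 6%nat ltac:(lia) ltac:(lia)); rewrite alive_words_6 in Hw.
    destruct Hw as [Hw | []]; apply eq_sym, (head_sum_m2 b2 b3) in Hw.
    split; [do 2 right; left; left; exact Hw | repeat split; intros; (exact Hw || lia)].
  - specialize (Hw 5%nat ltac:(lia) ltac:(lia)); rewrite alive_words_5 in Hw.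
    destruct Hw as [Hw | []]; apply eq_sym, (head_sum_m1 b2 b3) in Hw.
    split; [right; left; left; exact Hw | repeat split; intros; (exact Hw || lia)].
Qed.
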